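(* For every $n\ge0$, the simplicial set $\mathfrak{C}^{\square}(\square^n)(\alpha,\omega)$ is (weakly) contractible, where $\alpha=\emptyset$ and $\omega=\{1,\dots,n\}$.
   Context: Cubical sets: presheaves on the category $\square$ with objects $[1]^n$ and morphisms generated by faces $\partial_{i,\epsilon}$ (insert $\epsilon$ at coordinate $i$), degeneracies (delete a coordinate) and negative connections ($\gamma_{i,0}$ replaces $(x_i,x_{i+1})$ by $\max(x_i,x_{i+1})$); $\square^n$ is representable; its vertices are subsets of $\{1,\dots,n\}$. Rigidification: $I_m$ is $m$ copies of $\square^1$ glued end to start (with distinguished endpoints); $\mathbb{I}_{k,m}$ is $I_k,\square^2,I_{m-2-k}$ glued end to start through $\emptyset,\{1,2\}$ of $\square^2$; $s_{k,m},t_{k,m}:I_m\to\mathbb{I}_{k,m}$ are the identity on the other edges and send edges $k+1,k+2$ to $\emptyset\to\{2\}\to\{1,2\}$, resp. $\emptyset\to\{1\}\to\{1,2\}$. For a cubical set $S$ with vertices $a,b$, $\mathfrak{C}^{\square}_{path}(S)(a,b)$ is the set of maps $I_m\to S$ sending endpoints to $a,b$, modulo the equivalence generated by $\gamma\sim\gamma'\circ h$ ($h$ endpoint-preserving), preordered by the reflexive-transitive closure of $[F\circ s_{k,m}]\leadsto[F\circ t_{k,m}]$; concatenation gives a preorder-enriched category. $\mathfrak{C}^{\square}$ is the left Kan extension along Yoneda of $[1]^n\mapsto N(\mathfrak{C}^{\square}_{path}(\square^n))$ (nerve homwise). *)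

From Stdlib Require Import Relation_Operators ProofIrrelevance FunctionalExtensionality.
From mathcomp Require Import all_boot.

Set Implicit Arguments.
Unset Strict Implicit.
Unset Printing Implicit Defensive.

Definition mono (k l : nat) :=
  {f : 'I_k.+1 -> 'I_l.+1 | forall i j : 'I_k.+1, i <= j -> f i <= f j}.

Definition idm (k : nat) : mono k k.
Proof. by exists (fun i => i). Defined.

Definition compm k l m (g : mono l m) (f : mono k l) : mono k m.
Proof.
exists (fun i => proj1_sig g (proj1_sig f i)).
by move=> i j h; apply: (proj2_sig g); apply: (proj2_sig f).
Defined.

Record sSet := SSet {
  sx :> nat -> Type;
  sact : forall k l, mono k l -> sx l -> sx k;
  sact_id : forall k (x : sx k), sact (idm k) x = x;
  sact_comp : forall k l m (g : mono l m) (f : mono k l) (x : sx m),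
      sact (compm g f) x = sact f (sact g x);
  sact_ext : forall k l (f g : mono k l),
      (forall i, proj1_sig f i = proj1_sig g i) -> forall x, sact f x = sact g x
}.

Arguments sact s {k l} _ _.

Definition smap (X Y : sSet) :=
  {F : forall k, X k -> Y k |
     forall k l (f : mono k l) (x : X l), F k (sact X f x) = sact Y f (F l x)}.

Definition Delta0 : sSet.
Proof.
refine (@SSet (fun _ => unit) (fun _ _ _ _ => tt) _ _ _).
- by move=> k [].
- by [].
- by [].
Defined.

Definition to0 (k : nat) : mono k 0.
Proof. by exists (fun _ => ord0). Defined.

Definition const_map (X K : sSet) (v : K 0) : smap X K.
Proof.
exists (fun k _ => sact K (to0 k) v).
move=> k l f x; rewrite -sact_comp; apply: sact_ext => i /=.
by [].
Defined.

Arguments const_map X K v : clear implicits.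

Definition cst0 (k : nat) : mono k 1.
Proof. by exists (fun _ => ord0). Defined.
Definition cst1 (k : nat) : mono k 1.
Proof. by exists (fun _ => ord_max). Defined.

(* An (elementary) homotopy F ~ G : X -> K, i.e. a map H : X x Delta^1 -> K
   (a k-simplex of Delta^1 is a monotone map [k] -> [1]) restricting to F
   on the vertex 0 and to G on the vertex 1. *)
Definition htpy (X K : sSet) (F G : smap X K) : Prop :=
  exists H : forall k, X k -> mono k 1 -> K k,
    (forall k l (f : mono k l) (x : X l) (u : mono l 1),
        H k (sact X f x) (compm u f) = sact K f (H l x u)) /\
    (forall k (x : X k), H k x (cst0 k) = proj1_sig F k x) /\
    (forall k (x : X k), H k x (cst1 k) = proj1_sig G k x).

Definition homotopic (X K : sSet) : smap X K -> smap X K -> Prop :=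
  clos_refl_sym_trans (smap X K) (@htpy X K).

Lemma lift_homo (p : nat) (i : 'I_p.+2) :
  forall a b : 'I_p.+1, a <= b -> lift i a <= lift i b.
Proof.
move=> a b h; rewrite /= /bump.
case: (leqP i a) => ha; case: (leqP i b) => hb /=.
- by rewrite !add1n ltnS.
- by move: (leq_ltn_trans (leq_trans ha h) hb); rewrite ltnn.
- by rewrite add0n add1n; apply: leqW.
- by rewrite !add0n.
Qed.

Definition delta (p : nat) (i : 'I_p.+2) : mono p p.+1.
Proof. exists (lift i); exact: lift_homo. Defined.

(* A map Lambda^{p+1}_k -> K is a family of p-simplices y_i (i <> k), one for
   each face, agreeing on the pairwise intersections of the faces. *)
Definition Kan (K : sSet) : Prop :=
  forall (p : nat) (k : 'I_p.+2) (y : 'I_p.+2 -> K p),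
    (forall i j : 'I_p.+2, i != k -> j != k ->
       forall m (f g : mono m p),
         (forall t, lift i (proj1_sig f t) = lift j (proj1_sig g t)) ->
         sact K f (y i) = sact K g (y j)) ->
    exists z : K p.+1, forall i : 'I_p.+2, i != k -> sact K (delta i) z = y i.

(* X is weakly contractible: X -> Delta^0 is a weak homotopy equivalence,
   i.e. for every Kan complex K the induced map
   [Delta^0, K] -> [X, K] on homotopy classes is a bijection
   (first conjunct: surjective; second conjunct: injective). *)
Definition weakly_contractible (X : sSet) : Prop :=
  forall K : sSet, Kan K ->
    (forall F : smap X K, exists v : K 0, homotopic F (const_map X K v)) /\
    (forall v w : K 0,
        homotopic (const_map X K v) (const_map X K w) ->
        homotopic (const_map Delta0 K v) (const_map Delta0 K w)).

Lemma sig_eq_irr (A : Type) (P : A -> Prop) (x y : sig P) :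
  proj1_sig x = proj1_sig y -> x = y.
Proof.
case: x => a ha; case: y => b hb /= e; subst b.
by rewrite (proof_irrelevance _ ha hb).
Qed.

Definition nerve_sx (P : Type) (le : P -> P -> Prop) (k : nat) :=
  {x : 'I_k.+1 -> P | forall i j : 'I_k.+1, i <= j -> le (x i) (x j)}.

Definition nerve_act (P : Type) (le : P -> P -> Prop) k l (f : mono k l)
  (x : nerve_sx le l) : nerve_sx le k.
Proof.
exists (fun i => proj1_sig x (proj1_sig f i)).
by move=> i j h; apply: (proj2_sig x); apply: (proj2_sig f).
Defined.

Definition nerve (P : Type) (le : P -> P -> Prop) : sSet.
Proof.
refine (@SSet (nerve_sx le) (@nerve_act P le) _ _ _).
- by move=> k x; apply: sig_eq_irr.
- by move=> k l m g f x; apply: sig_eq_irr.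
- move=> k l f g e x; apply: sig_eq_irr => /=.
  by apply: functional_extensionality => i; rewrite e.
Defined.

(* [1]^n, coordinates indexed 0 .. n-1 (the paper's 1 .. n); a vertex
   (subset of {1..n}) is a point of [1]^n, i.e. its indicator function. *)
Definition cube (n : nat) := 'I_n -> bool.

Definition face (n : nat) (i : 'I_n.+1) (e : bool) (x : cube n) : cube n.+1 :=
  fun j => match unlift i j with Some j' => x j' | None => e end.

Definition degen (n : nat) (i : 'I_n.+1) (x : cube n.+1) : cube n :=
  fun j => x (lift i j).

Definition conn (n : nat) (i : 'I_n.+1) (x : cube n.+2) : cube n.+1 :=
  fun j => if (j < i)%N then x (inord j)
           else if j == i :> nat then x (inord j) || x (inord j.+1)
           else x (inord j.+1).

(* Morphisms of the cube category: the maps generated (under composition)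
   by faces, degeneracies and negative connections (maps are functions, so
   they are considered up to extensional equality). *)
Inductive cmap : forall m n : nat, (cube m -> cube n) -> Prop :=
| cmap_id n : @cmap n n (fun x => x)
| cmap_face n i e : @cmap n n.+1 (face i e)
| cmap_degen n i : @cmap n.+1 n (degen i)
| cmap_conn n i : @cmap n.+2 n.+1 (conn i)
| cmap_comp l m n (f : cube l -> cube m) (g : cube m -> cube n) :
    cmap f -> cmap g -> cmap (fun x => g (f x))
| cmap_ext m n (f g : cube m -> cube n) :
    cmap f -> (forall x j, f x j = g x j) -> cmap g.

Definition eqpt (n : nat) (u v : cube n) : Prop := forall i, u i = v i.

Definition c0 : cube 1 := fun _ => false.
Definition c1 : cube 1 := fun _ => true.
Definition ff2 : cube 2 := fun _ => false.
Definition tt2 : cube 2 := fun _ => true.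

(* A 1-cube of box^n is a cube map [1]^1 -> [1]^n.  A map I_m -> box^n
   (I_m = m copies of box^1 glued end to start) is a list of m 1-cubes,
   each starting where the previous one ends; with distinguished endpoints
   sent to a and b. *)
Definition edge (n : nat) := cube 1 -> cube n.

Fixpoint is_path (n : nat) (a b : cube n) (l : seq (edge n)) : Prop :=
  match l with
  | [::] => eqpt a b
  | e :: l' => cmap e /\ eqpt (e c0) a /\ is_path (e c1) b l'
  end.

(* 1-cubes of I_k : the k nondegenerate edges (IE j : j -> j+1, j < k) and
   the degenerate 1-cubes at the vertices (ID v, v <= k). *)
Inductive icell := IE of nat | ID of nat.
Definition isrc (c : icell) := match c with IE j => j | ID v => v end.
Definition itgt (c : icell) := match c with IE j => j.+1 | ID v => v end.
Definition ivalid (k : nat) (c : icell) :=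
  match c with IE j => (j < k)%N | ID v => (v <= k)%N end.

(* An endpoint-preserving map h : I_m -> I_k, given by the images of the m
   edges of I_m (a composable list of 1-cubes of I_k from vertex 0 to k). *)
Fixpoint is_ipath (k s : nat) (h : seq icell) : Prop :=
  match h with
  | [::] => s = k
  | c :: h' => ivalid k c /\ isrc c = s /\ is_ipath k (itgt c) h'
  end.

Definition pvtx (n : nat) (a : cube n) (g : seq (edge n)) (v : nat) : cube n :=
  match v with 0 => a | v'.+1 => nth (fun _ => a) g v' c1 end.

(* Image under g : I_k -> box^n of a 1-cube of I_k; the degenerate 1-cube at
   a vertex p of box^n is the constant map [1]^1 -> [1]^n at p. *)
Definition pimg (n : nat) (a : cube n) (g : seq (edge n)) (c : icell) : edge n :=
  match c with
  | IE j => nth (fun _ => a) g j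
  | ID v => fun _ => pvtx a g v
  end.

Definition edge_eq (n : nat) (e e' : edge n) : Prop := forall x i, e x i = e' x i.

(* Elementary relation  g ~ g' o h  (h endpoint-preserving). *)
Definition prel (n : nat) (a b : cube n) (g g' : seq (edge n)) : Prop :=
  is_path a b g /\ is_path a b g' /\
  exists h : seq icell, is_ipath (size g') 0 h /\
    size h = size g /\
    forall i, (i < size g)%N ->
      edge_eq (nth (fun _ => a) g i) (pimg a g' (nth (ID 0) h i)).

Definition peq (n : nat) (a b : cube n) : seq (edge n) -> seq (edge n) -> Prop :=
  clos_refl_sym_trans _ (@prel n a b).

Definition Pcls (n : nat) (a b : cube n) :=
  {A : seq (edge n) -> Prop |
     exists g, is_path a b g /\ forall g', A g' <-> peq a b g g'}.

(* The edges of I_2 -> box^2 for s (through {2}) and t (through {1}). *)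
Definition s_e1 : cube 1 -> cube 2 := face (ord0 : 'I_2) false.
Definition s_e2 : cube 1 -> cube 2 := face (ord_max : 'I_2) true.
Definition t_e1 : cube 1 -> cube 2 := face (ord_max : 'I_2) false.
Definition t_e2 : cube 1 -> cube 2 := face (ord0 : 'I_2) true.

(* One step [F o s_{k,m}] ~> [F o t_{k,m}], where F : II_{k,m} -> box^n is
   given by a path p (k edges) a -> q(empty), a 2-cube q, and a path
   r : q({1,2}) -> b. *)
Definition pstep (n : nat) (a b : cube n) (A B : Pcls a b) : Prop :=
  exists (p : seq (edge n)) (q : cube 2 -> cube n) (r : seq (edge n)),
    cmap q /\ is_path a (q ff2) p /\ is_path (q tt2) b r /\
    proj1_sig A (p ++ [:: (fun x => q (s_e1 x)); (fun x => q (s_e2 x))] ++ r) /\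
    proj1_sig B (p ++ [:: (fun x => q (t_e1 x)); (fun x => q (t_e2 x))] ++ r).

Definition ple (n : nat) (a b : cube n) : Pcls a b -> Pcls a b -> Prop :=
  clos_refl_trans _ (@pstep n a b).

(* C^box(box^n)(a,b) = N(C^box_path(box^n)(a,b)) (value of the left Kan
   extension along Yoneda at the representable box^n). *)
Definition Cbox_hom (n : nat) (a b : cube n) : sSet := nerve (@ple n a b).

Definition vtx_alpha (n : nat) : cube n := fun _ => false.
Definition vtx_omega (n : nat) : cube n := fun _ => true.
Arguments vtx_alpha n : clear implicits.
Arguments vtx_omega n : clear implicits.

(* The hom-preorder C_path(box^n)(alpha, omega) has a greatest element, and the nerve of
   a preorder with a top is weakly contractible: the homotopy that pushes the part of a
   simplex lying over the vertex 1 of Delta^1 to the top contracts every map out of it.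
   To find the top, note that every cube map raises at most one coordinate along an edge.
   Hence, after deleting degenerate edges, a path from alpha to omega raises the n
   coordinates one at a time in some order s.  A 2-cube spanned by coordinates i < j
   turns "j, then i" into "i, then j", so insertion sort of s is a chain of steps from
   any path to the path raising the coordinates in increasing order. *)

From Stdlib Require Import Relation_Operators FunctionalExtensionality PropExtensionality.
From mathcomp Require Import all_boot zify.

Set Implicit Arguments.
Unset Strict Implicit.
Unset Printing Implicit Defensive.

Definition smap_comp (X Y Z : sSet) (G : smap Y Z) (F : smap X Y) : smap X Z.
Proof.
exists (fun k x => proj1_sig G k (proj1_sig F k x)).
by move=> k l f x; rewrite (proj2_sig F) (proj2_sig G).
Defined.

Lemma const_map_comp (X Y K : sSet) (F : smap X Y) (v : K 0) :
  smap_comp (const_map Y K v) F = const_map X K v.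
Proof. exact: sig_eq_irr. Qed.

Lemma htpy_comp (X Y K : sSet) (P : smap X Y) (F G : smap Y K) :
  htpy F G -> htpy (smap_comp F P) (smap_comp G P).
Proof.
case=> H [Hnat [H0 H1]].
exists (fun k x u => H k (proj1_sig P k x) u); split; [|split] => /=.
- by move=> k l f x u; rewrite (proj2_sig P) Hnat.
- by move=> k x; rewrite H0.
- by move=> k x; rewrite H1.
Qed.

Lemma homotopic_comp (X Y K : sSet) (P : smap X Y) (F G : smap Y K) :
  homotopic F G -> homotopic (smap_comp F P) (smap_comp G P).
Proof.
elim=> {F G} [F G /(htpy_comp P)|F|F G _|F G H _ IH1 _ IH2].
- exact: rst_step.
- exact: rst_refl.
- exact: rst_sym.
- exact: rst_trans IH2.
Qed.

Lemma weakly_contractible_of_const_htpy (X : sSet) (x0 : X 0) :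
  (forall K (F : smap X K), exists v, homotopic F (const_map X K v)) ->
  weakly_contractible X.
Proof.
move=> contr K _; split=> [//|v w].
move/(homotopic_comp (const_map Delta0 X x0)).
by rewrite !const_map_comp.
Qed.

Section NerveTop.
Variables (P : Type) (le : P -> P -> Prop) (top : P).
Hypothesis le_top : forall x, le x top.

Definition top_simplex k : nerve le k.
Proof. by exists (fun _ => top) => *; apply: le_top. Defined.

Definition contract_simplex k (x : nerve le k) (u : mono k 1) : nerve le k.
Proof.
exists (fun i => if val (proj1_sig u i) == 0 then proj1_sig x i else top).
move=> i j hij; have := proj2_sig u i j hij.
case: eqP => [_|/eqP u_i]; case: eqP => [u_j|_] //.
- by move=> _; apply: (proj2_sig x).
- by rewrite u_j leqn0 (negbTE u_i).
Defined.

Lemma nerve_top_const_htpy K (F : smap (nerve le) K) :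
  htpy F (const_map (nerve le) K (proj1_sig F 0 (top_simplex 0))).
Proof.
exists (fun k x u => proj1_sig F k (contract_simplex x u)); split; [|split].
- move=> k l f x u; rewrite -(proj2_sig F).
  by congr (proj1_sig F k _); apply: sig_eq_irr.
- by move=> k x; congr (proj1_sig F k _); apply: sig_eq_irr.
- move=> k x /=; rewrite -(proj2_sig F).
  by congr (proj1_sig F k _); apply: sig_eq_irr.
Qed.

Lemma nerve_top_weakly_contractible : weakly_contractible (nerve le).
Proof.
apply: (weakly_contractible_of_const_htpy (top_simplex 0)) => K F.
by eexists; apply/rst_step/nerve_top_const_htpy.
Qed.
End NerveTop.

Lemma cubeP n (u v : cube n) : eqpt u v -> u = v.
Proof. exact: functional_extensionality. Qed.

Definition cset1 n (u : cube n) (j : 'I_n) : cube n := fun k => (k == j) || u k.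

Definition raises_at_most_one m n (f : cube m -> cube n) :=
  forall x i, f (cset1 x i) = f x \/ exists j, f (cset1 x i) = cset1 (f x) j.

Lemma lift_eq n (p : 'I_n.+1) i j : (lift p i == lift p j) = (i == j).
Proof. exact: (inj_eq (@lift_inj _ p)). Qed.

Lemma face_cset1 n i e (x : cube n) k :
  face i e (cset1 x k) = cset1 (face i e x) (lift i k).
Proof.
apply: cubeP => j; rewrite /face /cset1.
case: unliftP => [j'|] ->; first by rewrite lift_eq.
by rewrite (negbTE (neq_lift _ _)).
Qed.

Lemma degen_cset1 n i (x : cube n.+1) k :
  degen i (cset1 x k) =
  if unlift i k is Some k' then cset1 (degen i x) k' else degen i x.
Proof.
apply: cubeP => j; rewrite /degen /cset1.
case: unliftP => [k'|] ->; first by rewrite lift_eq.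
by rewrite eq_sym (negbTE (neq_lift _ _)).
Qed.

(* [conn i] merges input coordinates [i] and [i+1] into output coordinate [i] and
   shifts the later ones down by one. *)
Lemma conn_cset1 n i (x : cube n.+2) k :
  conn i (cset1 x k) = cset1 (conn i x) (inord (if k <= i then val k else k.-1)).
Proof.
apply: cubeP => j; rewrite /conn /cset1.
have val_inord a : a < n.+2 -> ((inord a : 'I_n.+2) == k) = (a == k).
  by move=> lt_a; rewrite -(inj_eq val_inj) /= inordK.
have lt_j := ltn_ord j; have lt_i := ltn_ord i; have lt_k := ltn_ord k.
rewrite !val_inord; try lia.
rewrite -(inj_eq val_inj) /= inordK; last by case: ifP; lia.
case: (x (inord j)) (x (inord j.+1)) => [] [];
repeat match goal with
| |- context [?a < ?b] => case: (boolP (a < b)) => ?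
| |- context [?a <= ?b] => case: (boolP (a <= b)) => ?
| |- context [?a == ?b] => case: (boolP (a == b)) => ?
end; rewrite ?orbT ?orbF //=; lia.
Qed.

Lemma cmap_raises_at_most_one m n f : @cmap m n f -> raises_at_most_one f.
Proof.
elim=> {m n f}.
- by move=> n x i; right; exists i.
- by move=> n i e x k; right; exists (lift i k); apply: face_cset1.
- move=> n i x k; rewrite degen_cset1.
  by case: (unlift i k) => [k'|]; [right; exists k' | left].
- by move=> n i x k; right; eexists; apply: conn_cset1.
- move=> l m n f g _ Hf _ Hg x i.
  case: (Hf x i) => [->|[j ->]]; [by left | exact: Hg].
- move=> m n f g _ Hf fg.
  have -> : g = f by apply: functional_extensionality => x; apply: cubeP => j; rewrite fg.
  exact: Hf.
Qed.

Definition coord_edge n (u : cube n) (j : 'I_n) : edge n :=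
  fun x k => if k == j then x ord0 else u k.

Definition coord_square n (u : cube n) (i j : 'I_n) : cube 2 -> cube n :=
  fun y k => if k == i then y ord0 else if k == j then y ord_max else u k.

Lemma cmap_of_face m n (p : 'I_n.+1) e (F : cube m -> cube n.+1) :
  (forall y, F y p = e) -> cmap (fun y => degen p (F y)) -> cmap F.
Proof.
move=> Fp cmapF; apply: (cmap_ext (cmap_comp cmapF (cmap_face p e))) => y k.
by rewrite /face; case: unliftP => [k'|] ->.
Qed.

Lemma exists_ord_notin n (A : {set 'I_n}) : #|A| < n -> exists p, p \notin A.
Proof.
move=> small_A; case: (pickP [pred p | p \notin A]) => [p|all_in]; first by exists p.
have /subset_leq_card : [set: 'I_n] \subset A.
  by apply/subsetP => p _; move: (all_in p) => /= /negbFE.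
by rewrite cardsT card_ord leqNgt small_A.
Qed.

Lemma cmap_coord_edge n (u : cube n) j : cmap (coord_edge u j).
Proof.
elim: n u j => [|[|n] IH] u j; first by case: j.
  by apply: (cmap_ext (cmap_id 1)) => x k; rewrite /coord_edge !ord1.
have [p] : exists p, p \notin [set j] by apply: exists_ord_notin; rewrite cards1.
rewrite in_set1 => p_j; case: (unlift_some p_j) => j' -> _.
apply: (cmap_of_face (p := p) (e := u p)) => [y|].
  by rewrite /coord_edge (negbTE (neq_lift _ _)).
apply: (cmap_ext (IH (degen p u) j')) => x k.
by rewrite /degen /coord_edge lift_eq.
Qed.

Lemma cmap_coord_square n (u : cube n) (i j : 'I_n) : i < j -> cmap (coord_square u i j).
Proof.
elim: n u i j => [|n IH] u i j lt_ij; first by case: i lt_ij.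
case: n IH u i j lt_ij => [|[|n]] IH u i j lt_ij.
- by rewrite !ord1 in lt_ij.
- apply: (cmap_ext (cmap_id 2)) => y k; rewrite /coord_square.
  move: i j lt_ij => [[|[|i]] //= ?] [[|[|j]] //= ?] _.
  by case: k => [[|[|k]] //= lt_k]; congr (y _); apply: val_inj.
have [p] : exists p, p \notin [set i; j].
  by apply: exists_ord_notin; rewrite cards2; case: (i != j).
rewrite !inE negb_or => /andP [p_i p_j].
case: (unlift_some p_i) => i' def_i _; case: (unlift_some p_j) => j' def_j _.
apply: (cmap_of_face (p := p) (e := u p)) => [y|].
  by rewrite /coord_square (negbTE p_i) (negbTE p_j).
have lt_ij' : i' < j'.
  by move: lt_ij; rewrite def_i def_j /= !ltnNge leq_bump2.
apply: (cmap_ext (IH (degen p u) i' j' lt_ij')) => x k.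
by rewrite /degen /coord_square def_i def_j !lift_eq.
Qed.

Lemma cube1_cases (x : cube 1) : x = c0 \/ x = c1.
Proof. by case hx: (x ord0); [right | left]; apply: cubeP => i; rewrite ord1 hx. Qed.

Lemma coord_edge_c0 n (u : cube n) j : u j = false -> coord_edge u j c0 = u.
Proof. by move=> u_j; apply: cubeP => k; rewrite /coord_edge; case: eqP => // ->. Qed.

Lemma coord_edge_c1 n (u : cube n) j : coord_edge u j c1 = cset1 u j.
Proof. by apply: cubeP => k; rewrite /coord_edge /cset1; case: eqP. Qed.

Lemma cmap_edge_cases n (e : edge n) : cmap e ->
  e = (fun=> e c0) \/ exists2 j, e c0 j = false & e = coord_edge (e c0) j.
Proof.
move=> cmap_e.
have e_eq : forall v, e c0 = v -> e c1 = v -> e = (fun=> v).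
  by move=> v e0 e1; apply: functional_extensionality => x; case: (cube1_cases x) => ->.
have c1_eq : c1 = cset1 c0 ord0 by apply: cubeP => i; rewrite ord1.
case: (cmap_raises_at_most_one cmap_e c0 ord0); rewrite -c1_eq.
  by move=> e1; left; apply: e_eq.
case=> j e1; case u_j: (e c0 j).
- left; apply: e_eq => //; rewrite e1; apply: cubeP => k.
  by rewrite /cset1; case: eqP => // ->.
- right; exists j => //; apply: functional_extensionality => x.
  by case: (cube1_cases x) => ->; rewrite ?coord_edge_c0 ?coord_edge_c1.
Qed.

Lemma is_path_cat n (a b : cube n) p r :
  is_path a b (p ++ r) <-> exists c, is_path a c p /\ is_path c b r.
Proof.
elim: p a => [|e p IH] a /=.
  by split=> [|[c [/cubeP -> //]]]; exists a.
split=> [[ce [e0 /IH [c [pc cr]]]]|[c [[ce [e0 pc]] cr]]]; first by exists c.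
by do 2!split=> //; apply/IH; exists c.
Qed.

Fixpoint coord_path n (u : cube n) (s : seq 'I_n) : seq (edge n) :=
  if s is j :: s' then coord_edge u j :: coord_path (cset1 u j) s' else [::].

Lemma coord_path_cat n (u : cube n) p r :
  coord_path u (p ++ r) = coord_path u p ++ coord_path (foldl (@cset1 n) u p) r.
Proof. by elim: p u => [|j p IH] u //=; rewrite IH. Qed.

Lemma foldl_cset1 n (u : cube n) s k : foldl (@cset1 n) u s k = (k \in s) || u k.
Proof. by elim: s u => [|j s IH] u //=; rewrite IH inE /cset1 orbA (orbC (k == j)). Qed.

Lemma is_path_coord_path n (u : cube n) s :
  uniq s -> (forall k, k \in s -> u k = false) ->
  is_path u (foldl (@cset1 n) u s) (coord_path u s).
Proof.
elim: s u => [|j s IH] u /=; first by move=> _ _ k.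
case/andP=> j_s uniq_s s_zero; split; first exact: cmap_coord_edge.
rewrite coord_edge_c0 ?s_zero ?mem_head //; split=> [k //|].
rewrite coord_edge_c1; apply: IH => // k k_s.
rewrite /cset1 s_zero ?inE ?k_s ?orbT // orbF.
by apply: contraNF j_s => /eqP <-.
Qed.

Definition lists_zeros n (u : cube n) (s : seq 'I_n) :=
  uniq s /\ forall k, (k \in s) = ~~ u k.

Lemma is_path_lists_zeros n (u : cube n) s :
  lists_zeros u s -> is_path u (vtx_omega n) (coord_path u s).
Proof.
case=> uniq_s s_zeros.
have -> : vtx_omega n = foldl (@cset1 n) u s.
  by apply: cubeP => k; rewrite foldl_cset1 s_zeros orNb.
by apply: is_path_coord_path => // k; rewrite s_zeros => /negbTE.
Qed.

Lemma pvtx_cat n (a c : cube n) p r : is_path a c p -> pvtx a (p ++ r) (size p) = c.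
Proof.
elim: p a => [|e p IH] a /=; first by move/cubeP.
case=> _ [_ /IH <-]; case: p {IH} => [|e' p] //=.
by rewrite (set_nth_default (fun=> e c1)) //= size_cat ltnS leq_addr.
Qed.

Lemma is_ipath_edges K s m h : s + m <= K -> is_ipath K (s + m) h ->
  is_ipath K s (map IE (iota s m) ++ h).
Proof.
elim: m s => [|m IH] s; first by rewrite addn0.
move=> le_K path_h /=; split; first by lia.
split=> //; apply: IH; first by lia.
by rewrite addSnnS.
Qed.

Lemma nth_skip_vertex k m i : i <= k + m ->
  nth (ID 0) (map IE (iota 0 k) ++ ID k :: map IE (iota k m)) i =
  if i < k then IE i else if i == k then ID k else IE i.-1.
Proof.
move=> le_i; rewrite nth_cat size_map size_iota.
case: ltnP => [lt_ik|le_ki]; first by rewrite (nth_map 0) ?size_iota ?nth_iota.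
case: eqP => [->|ne_ik]; first by rewrite subnn.
have -> : i - k = (i - k).-1.+1 by lia.
rewrite /= (nth_map 0) ?size_iota ?nth_iota; try lia.
by congr IE; lia.
Qed.

Lemma prel_drop_const n (a b : cube n) p e r :
  is_path a b (p ++ e :: r) -> e = (fun=> e c0) ->
  prel a b (p ++ e :: r) (p ++ r).
Proof.
move=> path_per const_e.
have [c [path_p [_ [/cubeP e0 path_r]]]] := (is_path_cat a b p (e :: r)).1 path_per.
rewrite const_e e0 in path_r.
split=> //; split; first by apply/is_path_cat; exists c.
exists (map IE (iota 0 (size p)) ++ ID (size p) :: map IE (iota (size p) (size r))).
split; last split.
- rewrite size_cat; apply: (is_ipath_edges (s := 0)); first by lia.
  split; first exact: leq_addr.
  by split=> //; rewrite -[map _ _]cats0; apply: is_ipath_edges.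
- by rewrite !size_cat /= !size_map !size_iota.
move=> i lt_i x k; rewrite size_cat /= addnS ltnS in lt_i.
rewrite nth_skip_vertex //; case: ltnP => [lt_ip|le_pi] /=.
  by rewrite !nth_cat lt_ip.
case: eqP => [->|/eqP ne_ip] /=.
  by rewrite nth_cat ltnn subnn const_e e0 (pvtx_cat r path_p).
have le_pi' : size p <= i.-1 by lia.
rewrite !nth_cat !ifN -?leqNgt //.
by have -> : i - size p = (i.-1 - size p).+1 by lia.
Qed.

Lemma lists_zeros_cons n (u : cube n) j s :
  u j = false -> lists_zeros (cset1 u j) s -> lists_zeros u (j :: s).
Proof.
move=> u_j [uniq_s s_zeros]; split.
  by rewrite /= uniq_s s_zeros /cset1 eqxx.
by move=> k; rewrite inE s_zeros /cset1 negb_or; case: eqP => // ->; rewrite u_j.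
Qed.

Lemma peq_coord_path n (a u : cube n) pre g :
  is_path a u pre -> is_path u (vtx_omega n) g ->
  exists2 s, lists_zeros u s &
    peq a (vtx_omega n) (pre ++ g) (pre ++ coord_path u s).
Proof.
elim: g u pre => [|e g IH] u pre path_pre /=.
  move=> /cubeP ->; exists [::]; last exact: rst_refl.
  by split=> // k; rewrite in_nil.
case=> cmap_e [/cubeP e0 path_g].
have path_eg : is_path u (vtx_omega n) (e :: g) by rewrite /= e0.
move: (cmap_edge_cases cmap_e); rewrite e0 => -[const_e|[j u_j def_e]].
- rewrite const_e in path_g; have [s zeros_s peq_g] := IH u pre path_pre path_g.
  exists s => //; apply: (rst_trans _ _ _ (pre ++ g)) peq_g.
  apply/rst_step/prel_drop_const; last by rewrite e0.
  by apply/is_path_cat; exists u.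
- have path_pre' : is_path a (e c1) (pre ++ [:: e]).
    by apply/is_path_cat; exists u; rewrite /= e0.
  have [s] := IH _ _ path_pre' path_g.
  rewrite def_e coord_edge_c1 -!catA /= => zeros_s peq_g.
  by exists (j :: s) => //; apply: lists_zeros_cons.
Qed.

Lemma lists_zeros_perm n (u : cube n) s t :
  perm_eq s t -> lists_zeros u s -> lists_zeros u t.
Proof.
by move=> st [uniq_s s_zeros]; split=> [|k]; rewrite -?(perm_uniq st) -?(perm_mem st).
Qed.

Lemma lists_zeros_cat n (u : cube n) p r : lists_zeros u (p ++ r) ->
  is_path u (foldl (@cset1 n) u p) (coord_path u p) /\
  lists_zeros (foldl (@cset1 n) u p) r.
Proof.
case; rewrite cat_uniq => /and3P [uniq_p /hasPn disj_pr uniq_r] pr_zeros.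
split.
  by apply: is_path_coord_path => // k k_p; apply/negbTE; rewrite -pr_zeros mem_cat k_p.
split=> // k; rewrite foldl_cset1 negb_or -pr_zeros mem_cat.
by case k_r: (k \in r); [rewrite (negbTE (disj_pr k k_r)) | rewrite orbF andNb].
Qed.

Lemma cset1C n (u : cube n) i j : cset1 (cset1 u i) j = cset1 (cset1 u j) i.
Proof. by apply: cubeP => k; rewrite /cset1 orbCA. Qed.

Lemma face2E (p : 'I_2) e (x : cube 1) k : face p e x k = if k == p then e else x ord0.
Proof.
rewrite /face; case: unliftP => [k'|] ->; last by rewrite eqxx.
by rewrite ord1 eq_sym (negbTE (neq_lift _ _)).
Qed.

Lemma coord_square_vertices n (w : cube n) i j : w i = false -> w j = false ->
  coord_square w i j ff2 = w /\ coord_square w i j tt2 = cset1 (cset1 w i) j.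
Proof.
move=> w_i w_j; split; apply: cubeP => k; rewrite /coord_square /cset1.
  by case: (k =P i) => [->|_] //; case: (k =P j) => [->|].
by case: (k =P i); case: (k =P j); rewrite ?orbT.
Qed.

Lemma coord_square_edges n (w : cube n) i j :
  w i = false -> w j = false -> i != j ->
  [/\ (fun x => coord_square w i j (s_e1 x)) = coord_edge w j,
      (fun x => coord_square w i j (s_e2 x)) = coord_edge (cset1 w j) i,
      (fun x => coord_square w i j (t_e1 x)) = coord_edge w i &
      (fun x => coord_square w i j (t_e2 x)) = coord_edge (cset1 w i) j].
Proof.
move=> w_i w_j ne_ij.
split; apply: functional_extensionality => x; apply: cubeP => k;
rewrite /coord_square /coord_edge /cset1 /s_e1 /s_e2 /t_e1 /t_e2 !face2E /=;
(case: (k =P i) => [ki|_]; [|case: (k =P j) => [kj|_]]);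
by rewrite ?ki ?kj ?eqxx ?w_i ?w_j ?(negbTE ne_ij) 1?eq_sym ?(negbTE ne_ij) ?orbT.
Qed.

(* [s_{k,m}] raises the second coordinate of the square first; on a square spanned by
   coordinates [i < j] a step therefore moves [i] in front of [j]. *)
Definition adjacent_swap n (s t : seq 'I_n) :=
  exists p r (i j : 'I_n), i < j /\ s = p ++ j :: i :: r /\ t = p ++ i :: j :: r.

Lemma pstep_adjacent_swap n (u : cube n) s t (A B : Pcls u (vtx_omega n)) :
  adjacent_swap s t -> lists_zeros u s ->
  proj1_sig A (coord_path u s) -> proj1_sig B (coord_path u t) -> pstep A B.
Proof.
move=> [p [r [i [j [lt_ij [-> ->]]]]]] /lists_zeros_cat [path_p zeros_jir].
rewrite !coord_path_cat /=; set w := foldl _ u p in path_p zeros_jir *.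
rewrite [cset1 (cset1 w j) i]cset1C => A_s B_t.
have [/= uniq_jir jir_zeros] := zeros_jir.
have w_j : w j = false by apply/negbTE; rewrite -jir_zeros mem_head.
have w_i : w i = false by apply/negbTE; rewrite -jir_zeros !inE eqxx orbT.
have ne_ij : i != j by move: uniq_jir; rewrite !inE eq_sym => /andP [/norP []].
have zeros_ijr : lists_zeros w ([:: i; j] ++ r).
  by apply: lists_zeros_perm zeros_jir; rewrite (perm_catCA [:: j] [:: i]).
have [_ /= zeros_r] := lists_zeros_cat zeros_ijr.
have [sq_ff sq_tt] := coord_square_vertices w_i w_j.
have [sq_s1 sq_s2 sq_t1 sq_t2] := coord_square_edges w_i w_j ne_ij.
exists (coord_path u p), (coord_square w i j), (coord_path (cset1 (cset1 w i) j) r).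
split; first exact: cmap_coord_square.
split; first by rewrite sq_ff.
split; first by rewrite sq_tt; apply: is_path_lists_zeros.
by rewrite sq_s1 sq_s2 sq_t1 sq_t2.
Qed.

Section InsertionSort.
Variable n : nat.
Notation swaps := (clos_refl_trans _ (@adjacent_swap n)).

Definition ord_lt : rel 'I_n := fun a b => a < b.

Fixpoint insert_ord (x : 'I_n) (t : seq 'I_n) : seq 'I_n :=
  if t is y :: t' then (if y < x then y :: insert_ord x t' else x :: t) else [:: x].

Fixpoint insertion_sort (s : seq 'I_n) : seq 'I_n :=
  if s is x :: s' then insert_ord x (insertion_sort s') else [::].

Lemma swaps_cons y t t' : swaps t t' -> swaps (y :: t) (y :: t').
Proof.
elim=> {t t'} [t t' [p [r [i [j [lt_ij [-> ->]]]]]]|t|t1 t2 t3 _ IH12 _ IH23].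
- by apply: rt_step; exists (y :: p), r, i, j.
- exact: rt_refl.
- exact: rt_trans IH23.
Qed.

Lemma swaps_insert x t : swaps (x :: t) (insert_ord x t).
Proof.
elim: t => [|y t IH] /=; first exact: rt_refl.
case: ifP => [lt_yx|_]; last exact: rt_refl.
apply: (rt_trans _ _ _ (y :: x :: t)); last exact: swaps_cons.
by apply: rt_step; exists [::], t, y, x.
Qed.

Lemma swaps_insertion_sort s : swaps s (insertion_sort s).
Proof.
elim: s => [|x s IH] /=; first exact: rt_refl.
apply: (rt_trans _ _ _ (x :: insertion_sort s)).
  exact: swaps_cons IH.
exact: swaps_insert.
Qed.

Lemma swaps_perm s t : swaps s t -> perm_eq s t.
Proof.
elim=> {s t} [s t [p [r [i [j [_ [-> ->]]]]]]|s|s1 s2 s3 _ perm12 _ perm23].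
- by rewrite perm_cat2l (perm_catCA [:: j] [:: i]).
- exact: perm_refl.
- exact: perm_trans perm23.
Qed.

Lemma ord_lt_total (x y : 'I_n) : x != y -> ~~ (y < x) -> x < y.
Proof.
move=> ne_xy; rewrite -leqNgt leq_eqVlt => /orP [/eqP eq_xy|//].
by rewrite (ord_inj eq_xy) eqxx in ne_xy.
Qed.

Lemma path_insert (z x : 'I_n) t :
  x \notin t -> z < x -> path ord_lt z t -> path ord_lt z (insert_ord x t).
Proof.
elim: t z => [|y t IH] z /=; first by rewrite andbT.
rewrite inE negb_or => /andP [ne_xy x_t] lt_zx /andP [lt_zy path_t].
case: ifP => [lt_yx|/negbT ge_yx] /=; first by rewrite lt_zy IH.
by rewrite /= path_t andbT; apply/andP; split; last exact: ord_lt_total.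
Qed.

Lemma sorted_insert (x : 'I_n) t :
  x \notin t -> sorted ord_lt t -> sorted ord_lt (insert_ord x t).
Proof.
case: t => [|y t] //=; rewrite inE negb_or => /andP [ne_xy x_t] path_t.
case: ifP => [lt_yx|/negbT ge_yx] /=; first exact: path_insert.
by rewrite path_t andbT; apply: ord_lt_total.
Qed.

Lemma sorted_insertion_sort s : uniq s -> sorted ord_lt (insertion_sort s).
Proof.
elim: s => [|x s IH] //= /andP [x_s uniq_s]; apply: sorted_insert (IH uniq_s).
by rewrite -(perm_mem (swaps_perm (swaps_insertion_sort s))).
Qed.

Lemma insertion_sort_lists_zeros s :
  lists_zeros (vtx_alpha n) s -> insertion_sort s = enum 'I_n.
Proof.
case=> uniq_s s_all; apply: (@irr_sorted_eq _ ord_lt).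
- exact: ltn_trans.
- exact: ltnn.
- exact: sorted_insertion_sort.
- by have := iota_ltn_sorted 0 n; rewrite -val_enum_ord sorted_map.
- by move=> k; rewrite -(perm_mem (swaps_perm (swaps_insertion_sort s))) s_all mem_enum.
Qed.
End InsertionSort.

Definition path_class n (a b : cube n) (g : seq (edge n)) (path_g : is_path a b g) :
  Pcls a b := exist _ (peq a b g) (ex_intro _ g (conj path_g (fun _ => iff_refl _))).

Lemma Pcls_eq n (a b : cube n) (A B : Pcls a b) g :
  proj1_sig A g -> proj1_sig B g -> A = B.
Proof.
case: A B => [PA hA] [PB hB] /= A_g B_g; apply: sig_eq_irr => /=.
case: hA hB A_g B_g => [gA [_ defA]] [gB [_ defB]] /defA A_g /defB B_g.
apply: functional_extensionality => g'.
apply: propositional_extensionality; rewrite defA defB.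
have peq_AB : peq a b gA gB by apply: rst_trans A_g (rst_sym _ _ _ _ B_g).
split=> [|peq_B]; first exact: rst_trans (rst_sym _ _ _ _ peq_AB).
exact: rst_trans peq_AB peq_B.
Qed.

Lemma ple_swaps n (u : cube n) s t (A B : Pcls u (vtx_omega n)) :
  clos_refl_trans _ (@adjacent_swap n) s t -> lists_zeros u s ->
  proj1_sig A (coord_path u s) -> proj1_sig B (coord_path u t) -> ple A B.
Proof.
move=> swaps_st; elim: swaps_st A B => {s t}
  [s t swap_st|s|s1 s2 s3 swaps12 IH12 _ IH23] A B.
- by move=> zeros_s A_s B_t; apply/rt_step/(pstep_adjacent_swap swap_st zeros_s).
- by move=> _ A_s B_s; rewrite (Pcls_eq A_s B_s); apply: rt_refl.
- move=> zeros_s1 A_s1 B_s3.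
  have zeros_s2 := lists_zeros_perm (swaps_perm swaps12) zeros_s1.
  pose M := path_class (is_path_lists_zeros zeros_s2).
  have M_s2 : proj1_sig M (coord_path u s2) by apply: rst_refl.
  by apply: (rt_trans _ _ _ M); [apply: IH12 | apply: IH23].
Qed.

Lemma lists_zeros_enum n : lists_zeros (vtx_alpha n) (enum 'I_n).
Proof. by split=> [|k]; rewrite ?enum_uniq ?mem_enum. Qed.

Lemma ple_top n (A : Pcls (vtx_alpha n) (vtx_omega n)) :
  ple A (path_class (is_path_lists_zeros (lists_zeros_enum n))).
Proof.
have [g [path_g defA]] := proj2_sig A.
have [s zeros_s peq_gs] := @peq_coord_path _ _ _ [::] g (fun _ => erefl) path_g.
apply: (ple_swaps (swaps_insertion_sort s) zeros_s).
- by apply/defA.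
- by rewrite (insertion_sort_lists_zeros zeros_s); apply: rst_refl.
Qed.

Theorem lemma3p3 (n : nat) : weakly_contractible (Cbox_hom (vtx_alpha n) (vtx_omega n)).
Proof. exact: nerve_top_weakly_contractible (@ple_top n). Qed.
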